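(* Let $1<K<n$ and $x\in\mathbb{R}^n$, and let $s(x)$, $i_x$, $\delta(x)$, $u(x)$ be as defined in the context. Then: (1) for $i=1,\dots,K-1$: $s(x)_{i+1}-s(x)_i=\frac{1}{K-i+1}\big(s(x)_{i+1}-|x|_{[i]}\big)=\frac{1}{K-i}\big(s(x)_i-|x|_{[i]}\big)$; (2) $s(x)_1\ge\dots\ge s(x)_{i_x}$ and $s(x)_{i_x}\le\dots\le s(x)_K$; (3) $u(x)\ge_m|x|$; (4) $u(x)_1=\max\{|x|_{[1]},s(x)_1\}$.
   Context: For $v\in\mathbb{R}^n$, $v_{[i]}$ is the $i$-th largest component, and $|x|$ is the componentwise absolute value, so $|x|_{[i]}$ is the $i$-th largest absolute value. Define $s(x)_i=\frac{\sum_{j=i}^n|x|_{[j]}}{K-i+1}$ for $i=1,\dots,K$, and $s(x)_0=s(x)_{K+1}=\infty$. Let $i_x$ be the smallest index in $\{1,\dots,K\}$ minimizing $s(x)_i$, $\delta(x)=s(x)_{i_x}$, and define $u(x)\in\mathbb{R}^n$ by $u(x)_i=|x|_{[i]}$ for $i\le i_x-1$, $u(x)_i=\delta(x)$ for $i_x\le i\le K$, and $u(x)_i=0$ for $i>K$. $a\ge_m b$ means $\sum_{i=1}^j a_{[i]}\ge\sum_{i=1}^j b_{[i]}$ for $j<n$ with equality for $j=n$. *)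

From HB Require Import structures.
From mathcomp Require Import all_boot all_order all_algebra.
Set Implicit Arguments. Unset Strict Implicit. Unset Printing Implicit Defensive.
Import Order.TTheory GRing.Theory Num.Theory.
Local Open Scope ring_scope.

Section Defs.
Variables (R : realFieldType) (n K : nat).

Definition absv (x : 'I_n -> R) : 'I_n -> R := fun i => `|x i|.

Definition dsort (v : 'I_n -> R) : seq R :=
  sort (fun a b : R => b <= a) [seq v i | i <- enum 'I_n].

(* v_[i] : the i-th largest component, 1-based (i = 1..n) *)
Definition kth (v : 'I_n -> R) (i : nat) : R := nth 0 (dsort v) i.-1.

Definition sx (x : 'I_n -> R) (i : nat) : R :=
  (\sum_(i <= j < n.+1) kth (absv x) j) / (K - i + 1)%:R.

(* i_x : the smallest index in {1..K} minimizing s(x)_i *)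
Definition ix (x : 'I_n -> R) : nat :=
  (find (fun i => all (fun j => sx x i <= sx x j) (iota 1 K)) (iota 1 K)).+1.

Definition delta (x : 'I_n -> R) : R := sx x (ix x).

(* u(x)_k, 1-based index k *)
Definition uf (x : 'I_n -> R) (k : nat) : R :=
  if (k < ix x)%N then kth (absv x) k
  else if (k <= K)%N then delta x else 0.

(* u(x) as a vector in R^n (entry i : 'I_n is the (i+1)-th component) *)
Definition u (x : 'I_n -> R) : 'I_n -> R := fun i => uf x i.+1.

Definition majorizes (a b : 'I_n -> R) : Prop :=
  (forall j : nat, (j < n)%N ->
     \sum_(1 <= i < j.+1) kth b i <= \sum_(1 <= i < j.+1) kth a i) /\
  \sum_(1 <= i < n.+1) kth a i = \sum_(1 <= i < n.+1) kth b i.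

End Defs.

From Pilot Require Import Defs.
From HB Require Import structures.
From mathcomp Require Import all_boot all_order all_algebra.
From mathcomp Require Import ring zify.
Import Order.TTheory GRing.Theory Num.Theory.
Set Implicit Arguments. Unset Strict Implicit. Unset Printing Implicit Defensive.
Local Open Scope ring_scope.

(* Let s_i be the tail averages of a nonnegative sequence a that is
   nonincreasing on 1..K.  From s_i = (a_i + (K - i) s_(i+1)) / (K - i + 1),
   the increment s_(i+1) - s_i has the sign of both s_(i+1) - a_i and s_i - a_i.
   So once s_i <= s_(i+1) we get a_(i+1) <= a_i <= s_(i+1), and the averages
   never decrease again: s decreases strictly up to its first minimiser i_x and
   is nondecreasing up to K.  Consequently the levelled sequence u is
   nonincreasing, and the partial sums of u - a vanish below i_x, equal
   (K - j) (s_(j+1) - s_(i_x)) >= 0 up to K, and then the nonnegative tail sum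
   of a, which is 0 at j = n. *)

(* tail_avg, tail_argmin and levelled are sx, ix and uf of Defs with the
   sequence |x|_[.] abstracted to a; they coincide by conversion. *)
Section TailAverages.
Variables (R : realFieldType) (a : nat -> R) (n K : nat).

Definition tail_sum (i : nat) : R := \sum_(i <= j < n.+1) a j.

Definition tail_avg (i : nat) : R := tail_sum i / (K - i + 1)%:R.

Definition tail_avg_minimal (i : nat) : bool :=
  all (fun j => tail_avg i <= tail_avg j) (iota 1 K).

Definition tail_argmin : nat := (find tail_avg_minimal (iota 1 K)).+1.

Definition levelled (k : nat) : R :=
  if (k < tail_argmin)%N then a k
  else if (k <= K)%N then tail_avg tail_argmin else 0.

Lemma tail_sumS i : (i <= n)%N -> tail_sum i = a i + tail_sum i.+1.
Proof. by move=> le_in; rewrite /tail_sum big_ltn. Qed.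

Lemma tail_sumE i : tail_sum i = (K - i + 1)%:R * tail_avg i.
Proof. by rewrite /tail_avg mulrC divfK // pnatr_eq0 addn1. Qed.

Hypothesis K_lt_n : (K < n)%N.

Lemma tail_avg_rec i : (i < K)%N ->
  tail_avg i = (a i + (K - i)%:R * tail_avg i.+1) / ((K - i)%:R + 1).
Proof.
move=> lt_iK; rewrite {1}/tail_avg (tail_sumS (_ : i <= n)%N); last by lia.
by rewrite tail_sumE (_ : K - i.+1 + 1 = K - i)%N ?natrD //; lia.
Qed.

Lemma tail_avg_subS i : (i < K)%N ->
  tail_avg i.+1 - tail_avg i = (tail_avg i.+1 - a i) / (K - i + 1)%:R /\
  tail_avg i.+1 - tail_avg i = (tail_avg i - a i) / (K - i)%:R.
Proof.
move=> lt_iK; rewrite natrD (tail_avg_rec lt_iK).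
have m_neq0 : (K - i)%:R != 0 :> R by rewrite pnatr_eq0; lia.
have m1_neq0 : (K - i)%:R + 1 != 0 :> R by rewrite natr1 pnatr_eq0.
by split; field; rewrite ?m_neq0 ?m1_neq0.
Qed.

Lemma le_tail_avgS_next i : (i < K)%N ->
  (tail_avg i <= tail_avg i.+1) = (a i <= tail_avg i.+1).
Proof.
move=> lt_iK; rewrite -subr_ge0 (tail_avg_subS lt_iK).1.
by rewrite pmulr_lge0 ?subr_ge0 // invr_gt0 ltr0n addn1.
Qed.

Lemma le_tail_avgS i : (i < K)%N ->
  (tail_avg i <= tail_avg i.+1) = (a i <= tail_avg i).
Proof.
move=> lt_iK; rewrite -subr_ge0 (tail_avg_subS lt_iK).2.
by rewrite pmulr_lge0 ?subr_ge0 // invr_gt0 ltr0n subn_gt0.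
Qed.

Hypothesis K_gt0 : (0 < K)%N.

Lemma has_tail_avg_minimal : has tail_avg_minimal (iota 1 K).
Proof.
case: (arg_minP (fun j : 'I_K => tail_avg j.+1) (isT : predT (Ordinal K_gt0)))
  => i _ min_i.
apply/hasP; exists i.+1; first by rewrite mem_iota add1n !ltnS ltn_ord.
apply/allP => j; rewrite mem_iota add1n ltnS => /andP[j_gt0 j_leK].
have lt_pj_K : (j.-1 < K)%N by rewrite prednK.
by have := min_i (Ordinal lt_pj_K) isT; rewrite /= prednK.
Qed.

Lemma tail_argmin_leK : (tail_argmin <= K)%N.
Proof. by have := has_tail_avg_minimal; rewrite has_find size_iota. Qed.

Lemma tail_argmin_min j : (0 < j)%N -> (j <= K)%N ->
  tail_avg tail_argmin <= tail_avg j.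
Proof.
move=> j_gt0 j_leK; have := nth_find 0 has_tail_avg_minimal.
rewrite nth_iota; last exact: tail_argmin_leK.
rewrite add1n => /allP; apply.
by rewrite mem_iota add1n ltnS j_gt0.
Qed.

Lemma tail_argmin_first i : (0 < i)%N -> (i < tail_argmin)%N ->
  tail_avg tail_argmin < tail_avg i.
Proof.
move=> i_gt0 lt_i_argmin.
have lt_find : (i.-1 < find tail_avg_minimal (iota 1 K))%N.
  by rewrite -ltnS prednK.
have := before_find 0 lt_find.
rewrite nth_iota ?add1n ?prednK //; last by have := tail_argmin_leK; lia.
case/allPn => j; rewrite mem_iota add1n ltnS -ltNge => /andP[j_gt0 j_leK].
by apply: le_lt_trans; apply: tail_argmin_min.
Qed.

Hypothesis a_noninc : forall i, (0 < i < K)%N -> a i.+1 <= a i.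

Lemma tail_avg_leS_propagate i j : (0 < i <= j)%N -> (j < K)%N ->
  tail_avg i <= tail_avg i.+1 -> tail_avg j <= tail_avg j.+1.
Proof.
case/andP=> i_gt0; elim: j => [|j IH]; first by rewrite leqNgt i_gt0.
rewrite leq_eqVlt ltnS => /orP[/eqP <- //|le_ij] lt_jK le_i.
have := IH le_ij (ltnW lt_jK) le_i; rewrite le_tail_avgS_next ?(ltnW lt_jK) //.
rewrite le_tail_avgS //; apply: le_trans; apply: a_noninc.
by rewrite (leq_trans i_gt0 le_ij) ltnW.
Qed.

Lemma tail_avg_decr_before i : (0 < i)%N -> (i < tail_argmin)%N ->
  tail_avg i.+1 < tail_avg i.
Proof.
move=> i_gt0 lt_i_argmin; rewrite ltNge; apply/negP => le_i.
have lt_iK : (i < K)%N := leq_trans lt_i_argmin tail_argmin_leK.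
suff : tail_avg i <= tail_avg tail_argmin by rewrite leNgt tail_argmin_first.
apply: (Order.NatMonotonyTheory.nondecn_inP (D := [pred k | i <= k <= K]%N)).
- move=> p q; rewrite !inE => /andP[le_ip _] /andP[_ le_qK] k /andP[lt_pk lt_kq].
  by rewrite inE (leq_trans le_ip (ltnW lt_pk)) (leq_trans (ltnW lt_kq) le_qK).
- move=> k; rewrite !inE => /andP[le_ik _] /andP[_ lt_kK].
  by apply: (tail_avg_leS_propagate (i := i)); rewrite ?i_gt0.
- by rewrite inE leqnn ltnW.
- by rewrite inE ltnW ?tail_argmin_leK.
- exact: ltnW.
Qed.

Lemma tail_avg_incr_after i : (tail_argmin <= i)%N -> (i < K)%N ->
  tail_avg i <= tail_avg i.+1.
Proof.
move=> le_argmin_i lt_iK.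
apply: (tail_avg_leS_propagate (i := tail_argmin)); rewrite ?le_argmin_i //.
exact/tail_argmin_min/(leq_ltn_trans le_argmin_i lt_iK).
Qed.

Hypothesis a_ge0 : forall i, 0 <= a i.

Lemma tail_sum_ge0 i : 0 <= tail_sum i.
Proof. exact: sumr_ge0. Qed.

Lemma tail_avg_ge0 i : 0 <= tail_avg i.
Proof. by rewrite divr_ge0 ?tail_sum_ge0. Qed.

Lemma levelled_noninc k : (0 < k)%N -> levelled k.+1 <= levelled k.
Proof.
move=> k_gt0; have argmin_leK := tail_argmin_leK.
rewrite /levelled; case: (ltnP k.+1 tail_argmin) => [lt_Sk | le_argmin_Sk].
  by rewrite (ltnW lt_Sk) a_noninc // k_gt0 (leq_trans (ltnW lt_Sk)).
case: (ltnP k tail_argmin) => [lt_k | le_argmin_k].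
  have argminE : tail_argmin = k.+1 by apply/eqP; rewrite eqn_leq le_argmin_Sk.
  have lt_kK : (k < K)%N by rewrite -argminE.
  have := tail_avg_decr_before k_gt0 lt_k.
  by rewrite argminE lt_kK ltNge le_tail_avgS_next // -ltNge => /ltW.
case: (leqP k.+1 K) => [le_SkK | lt_K_Sk]; first by rewrite ltnW.
by case: (leqP k K) => // _; apply: tail_avg_ge0.
Qed.

Lemma levelled1 : (1 < K)%N -> levelled 1 = Num.max (a 1) (tail_avg 1).
Proof.
move=> K_gt1; rewrite /levelled; case: ifP => [lt_1_argmin | /negbT].
  have := tail_avg_decr_before (ltn0Sn 0) lt_1_argmin.
  by rewrite ltNge le_tail_avgS // -ltNge => /ltW /max_l.
rewrite -leqNgt leq_eqVlt ltnS leqn0 orbF => /eqP argminE.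
have le_avg12 : tail_avg 1 <= tail_avg 2.
  by apply: tail_avg_incr_after; rewrite ?argminE.
by rewrite argminE /= (ltnW K_gt1) max_r // -le_tail_avgS.
Qed.

Lemma sum_levelled_sub_before j : (j < tail_argmin)%N ->
  \sum_(1 <= i < j.+1) (levelled i - a i) = 0.
Proof.
move=> lt_j_argmin; rewrite big_nat_cond big1 // => i /andP[/andP[_ lt_i_Sj] _].
by rewrite /levelled (leq_ltn_trans _ lt_j_argmin) ?subrr // -ltnS.
Qed.

(* For j >= K the truncated factor K - j is 0 and only the tail sum remains. *)
Lemma sum_levelled_subE j : (tail_argmin <= j.+1)%N -> (j <= n)%N ->
  \sum_(1 <= i < j.+1) (levelled i - a i)
    = tail_sum j.+1 - (K - j)%:R * tail_avg tail_argmin.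
Proof.
elim: j => [|j IH] le_argmin le_jn.
  have argminE : tail_argmin = 1%N by apply/eqP; rewrite eqn_leq le_argmin.
  by rewrite big_geq // argminE tail_sumE subnK // subn0 subrr.
case: (ltngtP tail_argmin j.+2) => [lt_argmin | | argminE]; last first.
- rewrite sum_levelled_sub_before -?argminE // tail_sumE argminE.
  by rewrite (_ : K - j.+2 + 1 = K - j.+1)%N ?subrr //; have := tail_argmin_leK; lia.
- by rewrite ltnNge le_argmin.
rewrite big_nat_recr //= IH ?(ltnW le_jn) // (tail_sumS le_jn) /levelled.
rewrite ltnNge -ltnS lt_argmin /=.
case: (leqP j.+1 K) => [le_SjK | lt_K_Sj].
  rewrite (_ : K - j = (K - j.+1) + 1)%N ?natrD; last by lia.
  move: (K - j.+1)%:R => m; ring.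
have [-> ->] : (K - j = 0 /\ K - j.+1 = 0)%N by lia.
by rewrite mul0r !subr0 add0r addrC addKr.
Qed.

Lemma sum_levelled_sub_ge0 j : (j < n)%N ->
  0 <= \sum_(1 <= i < j.+1) (levelled i - a i).
Proof.
move=> lt_jn; case: (ltnP j tail_argmin) => [lt_j_argmin | le_argmin_j].
  by rewrite sum_levelled_sub_before.
rewrite sum_levelled_subE ?(ltnW lt_jn) ?(leq_trans le_argmin_j) //.
case: (ltnP j K) => [lt_jK | le_Kj].
  rewrite tail_sumE (_ : K - j.+1 + 1 = K - j)%N; last by lia.
  by rewrite -mulrBr mulr_ge0 ?subr_ge0 ?tail_argmin_min.
by rewrite (_ : K - j = 0)%N ?mul0r ?subr0 ?tail_sum_ge0; lia.
Qed.

Lemma sum_levelled_sub_eq0 : \sum_(1 <= i < n.+1) (levelled i - a i) = 0.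
Proof.
rewrite sum_levelled_subE //; last exact: leq_trans tail_argmin_leK (leqW (ltnW K_lt_n)).
by rewrite /tail_sum big_geq // (_ : K - n = 0)%N ?mul0r ?subrr //; lia.
Qed.

End TailAverages.

Lemma kth_ge0 (R : realFieldType) n (v : 'I_n -> R) i :
  (forall j, 0 <= v j) -> 0 <= kth v i.
Proof.
move=> v_ge0; rewrite /kth; case: (ltnP i.-1 (size (dsort v))) => [lt_i | le_i].
  by move: (mem_nth 0 lt_i); rewrite mem_sort => /mapP[j _ ->].
by rewrite nth_default.
Qed.

Lemma size_dsort (R : realFieldType) n (v : 'I_n -> R) : size (dsort v) = n.
Proof. by rewrite size_sort size_map size_enum_ord. Qed.

Lemma dsort_sorted (R : realFieldType) n (v : 'I_n -> R) :
  sorted (fun a b : R => b <= a) (dsort v).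
Proof. by apply: sort_sorted => a b; apply: le_total. Qed.

Lemma kth_leS (R : realFieldType) n (v : 'I_n -> R) i :
  (0 < i < n)%N -> kth v i.+1 <= kth v i.
Proof.
case/andP=> i_gt0 lt_in; rewrite /kth /=.
apply: (sorted_leq_nth (leT := fun a b : R => b <= a) ge_trans ge_refl _ (dsort_sorted v));
  rewrite ?inE ?size_dsort; lia.
Qed.

Lemma kth_sorted (R : realFieldType) n (f : nat -> R) i :
  (forall k, (0 < k < n)%N -> f k.+1 <= f k) -> (0 < i <= n)%N ->
  kth (fun j : 'I_n => f j.+1) i = f i.
Proof.
move=> f_noninc /andP[i_gt0 le_in]; rewrite /kth /dsort.
have -> : [seq f (val j).+1 | j <- enum 'I_n] = [seq f k.+1 | k <- iota 0 n].
  by rewrite -val_enum_ord -map_comp.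
rewrite sorted_sort.
- by rewrite (nth_map 0%N) ?nth_iota ?size_iota ?prednK //; lia.
- exact: ge_trans.
apply/(sortedP 0) => k; rewrite size_map size_iota => lt_Skn.
have lt_kn := ltnW lt_Skn.
by rewrite !(nth_map 0%N) ?size_iota ?nth_iota ?add0n // f_noninc.
Qed.

Section SortedAbsoluteValues.
Variables (R : realFieldType) (n K : nat) (x : 'I_n -> R).
Hypotheses (K_gt1 : (1 < K)%N) (K_lt_n : (K < n)%N).

Let K_gt0 : (0 < K)%N := ltnW K_gt1.

Lemma kth_absv_ge0 i : 0 <= kth (absv x) i.
Proof. by apply: kth_ge0 => j; apply: normr_ge0. Qed.

Lemma kth_absv_noninc i : (0 < i < K)%N -> kth (absv x) i.+1 <= kth (absv x) i.
Proof. by case/andP=> i_gt0 lt_iK; rewrite kth_leS // i_gt0 (ltn_trans lt_iK). Qed.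

Lemma sum_kth_u j : (j <= n)%N ->
  \sum_(1 <= i < j.+1) kth (u K x) i = \sum_(1 <= i < j.+1) uf K x i.
Proof.
move=> le_jn; apply: eq_big_nat => i /andP[i_gt0 lt_i_Sj].
apply: (@kth_sorted _ _ (uf K x)) => [k /andP[k_gt0 _]|].
  exact: (levelled_noninc K_lt_n K_gt0 kth_absv_noninc kth_absv_ge0 k_gt0).
by rewrite i_gt0 (leq_trans _ le_jn) // -ltnS.
Qed.

Lemma u_majorizes : majorizes (u K x) (absv x).
Proof.
split=> [j lt_jn|]; last apply/eqP.
  rewrite -subr_ge0 sum_kth_u 1?ltnW // -sumrB.
  exact: (sum_levelled_sub_ge0 K_lt_n K_gt0 kth_absv_ge0).
rewrite -subr_eq0 sum_kth_u // -sumrB.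
by rewrite (sum_levelled_sub_eq0 _ K_lt_n K_gt0).
Qed.

End SortedAbsoluteValues.

Theorem mainTheorem5 (R : realFieldType) (n K : nat) (x : 'I_n -> R) :
  (1 < K)%N -> (K < n)%N ->
  (* (1) *)
  (forall i : nat, (1 <= i)%N -> (i <= K - 1)%N ->
     sx K x i.+1 - sx K x i
       = (sx K x i.+1 - kth (absv x) i) / (K - i + 1)%:R /\
     sx K x i.+1 - sx K x i
       = (sx K x i - kth (absv x) i) / (K - i)%:R) /\
  (* (2) *)
  (forall i : nat, (1 <= i)%N -> (i < ix K x)%N -> sx K x i.+1 <= sx K x i) /\
  (forall i : nat, (ix K x <= i)%N -> (i < K)%N -> sx K x i <= sx K x i.+1) /\
  (* (3) *)
  majorizes (u K x) (absv x) /\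
  (* (4) *)
  uf K x 1 = Num.max (kth (absv x) 1) (sx K x 1).
Proof.
move=> K_gt1 K_lt_n; have K_gt0 := ltnW K_gt1.
have a_noninc := kth_absv_noninc x K_lt_n.
split; [|split; [|split; [|split]]].
- move=> i _ le_i_predK; apply: tail_avg_subS => //; lia.
- move=> i i_gt0 lt_i_ix; apply/ltW.
  exact: (tail_avg_decr_before K_lt_n K_gt0 a_noninc i_gt0 lt_i_ix).
- move=> i le_ix_i lt_iK.
  exact: (tail_avg_incr_after K_lt_n K_gt0 a_noninc le_ix_i lt_iK).
- exact: u_majorizes.
- exact: (levelled1 K_lt_n K_gt0 a_noninc K_gt1).
Qed.
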